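(* There is some $d_0$ such that the following holds for every $d\geq d_0$ and every positive integer $t$. Let $G$ be a finite bipartite graph with average degree $d\geq t^4$ which contains no $C_4$-free subgraph with average degree at least $t$. Then there is a vertex $v\in V(G)$ and disjoint sets $A'\subseteq N(v)$ and $B'\subseteq V(G)\setminus\{v\}$ such that $d(G[A',B'])\geq d^{1/5}$.
   Context: $d(\cdot)$ denotes average degree, $d(F)=2e(F)/|V(F)|$. $N(v)$ is the neighbourhood of $v$ in $G$. For disjoint vertex sets $A',B'$, $G[A',B']$ is the bipartite subgraph of $G$ with vertex set $A'\cup B'$ consisting of all edges of $G$ between $A'$ and $B'$. A graph is $C_4$-free if it contains no $4$-cycle as a subgraph. *)

From Stdlib Require Import Reals.
From mathcomp Require Import all_boot.
Set Implicit Arguments. Unset Strict Implicit. Unset Printing Implicit Defensive.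

Definition simple_graph (T : finType) (e : rel T) : Prop :=
  (forall x y, e x y -> e y x) /\ (forall x, ~~ e x x).

Definition bipartite (T : finType) (e : rel T) : Prop :=
  exists X : {set T}, forall x y, e x y -> (x \in X) != (y \in X).

Definition subgraph_of (T : finType) (e : rel T) (S : {set T}) (f : rel T) : Prop :=
  (forall x y, f x y -> f y x) /\
  (forall x y, f x y -> [&& x \in S, y \in S & e x y]).

Definition edge_set (T : finType) (S : {set T}) (f : rel T) : {set {set T}} :=
  [set E : {set T} | [exists x in S, exists y in S,
     [&& x != y, f x y & E == [set x; y]]]].

Definition avg_deg (T : finType) (S : {set T}) (f : rel T) : R :=
  if S == set0 then R0
  else Rdiv (Rmult 2 (INR #|edge_set S f|)) (INR #|S|).

Definition C4_free (T : finType) (f : rel T) : Prop :=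
  ~ exists a b c d : T,
      [/\ uniq [:: a; b; c; d], f a b, f b c, f c d & f d a].

Definition nbhd (T : finType) (e : rel T) (v : T) : {set T} := [set u | e v u].

Definition bip_rel (T : finType) (e : rel T) (A B : {set T}) : rel T :=
  fun x y => e x y && (((x \in A) && (y \in B)) || ((x \in B) && (y \in A))).

From Stdlib Require Import Reals Lra Classical Znat.
From mathcomp Require Import all_boot zify.
Set Implicit Arguments. Unset Strict Implicit. Unset Printing Implicit Defensive.

(* Suppose no vertex v and sets A ⊆ N(v), B ∌ v give a graph G[A, B] of
   average degree at least d^(1/5), and fix an integer κ ∈ [d^(1/5), d^(1/5) + 1].
   Pass to a subgraph W of minimum degree δ ≈ d/2, orient its edges from the
   larger side X, and let every x ∈ X ∩ W pick δ of its neighbours.  Take a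
   maximal set F of picked edges that is C4-free and has at most D = 4t edges
   at each x.  A picked edge xy outside F either starts at a saturated x
   (at most δ|F|/D such edges) or closes a 4-cycle x y' w y, so it is an edge
   of G[A, B] with A the F-neighbours of y' and B the second F-neighbourhood
   of y'; by assumption these graphs carry at most κ(1+D)|F|/2 edges in total.
   As δ ≥ 14 t² κ, F has at least t|W|/2 edges, a C4-free subgraph of average
   degree ≥ t. *)

Section PairSets.
Variable T : finType.
Implicit Types (F : {set T * T}) (x y u v : T).

Definition row F x := [set y | (x, y) \in F].
Definition col F y := [set x | (x, y) \in F].

Definition pair_rel F : rel T := fun u v => ((u, v) \in F) || ((v, u) \in F).

Lemma card_pairs_row F : #|F| = \sum_x #|row F x|.
Proof.
rewrite -sum1_card (partition_big fst xpredT) //=; apply: eq_bigr => x _.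
rewrite -sum1_card (reindex_onto (fun y => (x, y)) snd) /=.
  by apply: eq_bigl => y; rewrite inE !eqxx !andbT.
by move=> [x' y] /andP [_ /eqP /= ->].
Qed.

Lemma card_pairs_col F : #|F| = \sum_y #|col F y|.
Proof.
rewrite -sum1_card (partition_big snd xpredT) //=; apply: eq_bigr => y _.
rewrite -sum1_card (reindex_onto (fun x => (x, y)) fst) /=.
  by apply: eq_bigl => x; rewrite inE !eqxx !andbT.
by move=> [x y'] /andP [_ /eqP /= ->].
Qed.

Lemma pair_rel_sym F : symmetric (pair_rel F).
Proof. by move=> u v; rewrite /pair_rel orbC. Qed.

Lemma pair_relU F1 F2 u v :
  pair_rel (F1 :|: F2) u v = pair_rel F1 u v || pair_rel F2 u v.
Proof.
rewrite /pair_rel !inE.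
by case: ((u, v) \in F1); case: ((v, u) \in F1); case: ((u, v) \in F2).
Qed.

Lemma pair_rel1 x y u v : pair_rel [set (x, y)] u v -> [set u; v] = [set x; y].
Proof.
by rewrite /pair_rel !inE !xpair_eqE => /orP [] /andP [/eqP -> /eqP ->] //; rewrite setUC.
Qed.

End PairSets.

Lemma card_bigcup_le (I T : finType) (P : pred I) (F : I -> {set T}) :
  #|\bigcup_(i | P i) F i| <= \sum_(i | P i) #|F i|.
Proof.
elim/big_rec2: _ => [|i n S _ IH]; first by rewrite cards0.
by apply: leq_trans (leq_card_setU _ _) _; rewrite leq_add2l.
Qed.

Section C4.
Variable T : finType.
Implicit Types (f : rel T) (F : {set T * T}).

Definition C4_freeb f : bool :=
  [forall a, forall b, forall c, forall d,
     ~~ [&& uniq [:: a; b; c; d], f a b, f b c, f c d & f d a]].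

Lemma C4_freeP f : reflect (C4_free f) (C4_freeb f).
Proof.
apply: (iffP idP) => [/forallP C4f [a [b [c [d [abcd fab fbc fcd fda]]]]] | C4f].
  by move: (C4f a) => /forallP/(_ b)/forallP/(_ c)/forallP/(_ d); rewrite abcd fab fbc fcd fda.
apply/forallP => a; apply/forallP => b; apply/forallP => c; apply/forallP => d.
by apply/negP => /and5P [abcd fab fbc fcd fda]; apply: C4f; exists a, b, c, d.
Qed.

(* The vertices of the cycle are distinct, so {x, y} is only one of its four
   edges and the other three form an F-path x - y' - w - y. *)
Lemma C4_through_pair F x y a b c d :
  uniq [:: a; b; c; d] -> pair_rel [set (x, y)] a b ->
  pair_rel ((x, y) |: F) b c -> pair_rel ((x, y) |: F) c d -> pair_rel ((x, y) |: F) d a ->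
  exists y' w, [&& pair_rel F x y', pair_rel F y' w, pair_rel F w y & y != y'].
Proof.
move=> abcd xy_ab; rewrite !pair_relU.
have ab_xy := pair_rel1 xy_ab.
have [c_ab d_ab] : c \notin [set a; b] /\ d \notin [set a; b].
  move: abcd; rewrite /= !inE !negb_or => /and4P [/and3P [_ ac ad] /andP [bc bd] _ _].
  by rewrite ![c == _]eq_sym ![d == _]eq_sym ac ad bc bd.
case/orP => [/pair_rel1 bc_xy | fbc]; first by case/negP: c_ab; rewrite ab_xy -bc_xy !inE eqxx orbT.
case/orP => [/pair_rel1 cd_xy | fcd]; first by case/negP: c_ab; rewrite ab_xy -cd_xy !inE eqxx.
case/orP => [/pair_rel1 da_xy | fda]; first by case/negP: d_ab; rewrite ab_xy -da_xy !inE eqxx.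
move: c_ab d_ab; rewrite !inE => /norP [ca cb] /norP [da db].
move: xy_ab; rewrite [pair_rel _ a b]/pair_rel !inE !xpair_eqE.
case/orP => /andP [/eqP <- /eqP <-].
  exists d, c; rewrite (pair_rel_sym F a) fda (pair_rel_sym F d) fcd.
  by rewrite (pair_rel_sym F c) fbc eq_sym db.
by exists c, d; rewrite fbc fcd fda eq_sym ca.
Qed.

Lemma C4_freeb_setU1 F x y :
  C4_freeb (pair_rel F) -> ~~ C4_freeb (pair_rel ((x, y) |: F)) ->
  exists y' w, [&& pair_rel F x y', pair_rel F y' w, pair_rel F w y & y != y'].
Proof.
move=> /forallP C4F /forallPn [a /forallPn [b /forallPn [c /forallPn [d]]]].
move=> /negPn /and5P [abcd gab gbc gcd gda].
move: (gab) (gbc) (gcd) (gda); rewrite !pair_relU.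
case/orP => [xy_ab _ _ _ | fab]; first exact: C4_through_pair abcd xy_ab gbc gcd gda.
case/orP => [xy_bc _ _ | fbc].
  by apply: (C4_through_pair _ xy_bc gcd gda gab); rewrite -(rot_uniq 1) in abcd.
case/orP => [xy_cd _ | fcd].
  by apply: (C4_through_pair _ xy_cd gda gab gbc); rewrite -(rot_uniq 2) in abcd.
case/orP => [xy_da | fda].
  by apply: (C4_through_pair _ xy_da gab gbc gcd); rewrite -(rot_uniq 3) in abcd.
by move: (C4F a) => /forallP/(_ b)/forallP/(_ c)/forallP/(_ d); rewrite abcd fab fbc fcd fda.
Qed.

End C4.

Section AverageDegree.
Local Open Scope R_scope.
Variables (T : finType) (S : {set T}) (f : rel T).

Lemma edge_set0 : edge_set set0 f = set0.
Proof. by apply/setP => E; rewrite !inE; apply/negbTE/existsP => -[x]; rewrite inE. Qed.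

Lemma card_gt0_INR : S != set0 -> 0 < INR #|S|.
Proof. by move=> S_ne; apply: lt_0_INR; apply/ltP; rewrite card_gt0. Qed.

Lemma avg_deg_mul_card : S != set0 ->
  avg_deg S f * INR #|S| = INR (2 * #|edge_set S f|).
Proof.
move=> S_ne; have := card_gt0_INR S_ne.
rewrite /avg_deg (negbTE S_ne) mult_INR [INR 2]/= => S_pos; field; lra.
Qed.

Lemma avg_deg_ge_nat (t : nat) : S != set0 ->
  (t * #|S| <= 2 * #|edge_set S f|)%N -> INR t <= avg_deg S f.
Proof.
move=> S_ne /leP /le_INR; rewrite -avg_deg_mul_card // mult_INR => le_t.
exact: Rmult_le_reg_r (card_gt0_INR S_ne) le_t.
Qed.

Lemma avg_deg_lt_nat (m : nat) :
  (2 * #|edge_set S f| < m * #|S|)%N -> avg_deg S f < INR m.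
Proof.
move=> lt_m.
have S_ne : S != set0 by apply: contraTneq lt_m => ->; rewrite cards0 muln0.
move/ltP/lt_INR: lt_m; rewrite -avg_deg_mul_card // mult_INR => lt_m.
exact: Rmult_lt_reg_r (card_gt0_INR S_ne) lt_m.
Qed.

Lemma nat_density_of_avg_deg_lt (k : R) (κ : nat) :
  avg_deg S f < k -> k <= INR κ -> (2 * #|edge_set S f| <= κ * #|S|)%N.
Proof.
move=> lt_k k_le; rewrite leqNgt; apply/negP => dense.
have S_ne : S != set0 by apply: contraTneq dense => ->; rewrite edge_set0 !cards0 muln0.
have := avg_deg_ge_nat S_ne (ltnW dense); lra.
Qed.

End AverageDegree.

Lemma avg_deg_lt_floor (T : finType) (f : rel T) (B : nat) : 0 < #|T| ->
  #|edge_set [set: T] f| <= B -> Rlt (avg_deg [set: T] f) (2 * (INR (B %/ #|T|) + 1)).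
Proof.
move=> T_pos le_B.
rewrite (_ : Rmult 2 _ = INR (2 * (B %/ #|T|).+1)); last by rewrite mult_INR [INR 2]/= S_INR; ring.
apply: avg_deg_lt_nat; rewrite cardsT -mulnA ltn_pmul2l //.
exact: leq_ltn_trans le_B (ltn_ceil _ T_pos).
Qed.

(* The negation of the conclusion, with an integer κ >= d^(1/5) for d^(1/5). *)
Definition sparse_links (T : finType) (e : rel T) (κ : nat) : Prop :=
  forall v (A B : {set T}), A \subset nbhd e v -> B \subset [set~ v] -> [disjoint A & B] ->
    2 * #|edge_set (A :|: B) (bip_rel e A B)| <= κ * #|A :|: B|.

Lemma greedy_count_arith (a f s u δ D κ : nat) :
  a * δ <= f + s + u -> D * s <= δ * f -> 2 * u <= κ * (1 + D) * f ->
  2 * D + D * κ * (1 + D) <= 2 * δ -> D * a <= 2 * f.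
Proof.
move=> cover sat unsat δ_ge.
have [δ0 | δ_pos] := posnP δ; first by have -> : D = 0 by rewrite δ0 in δ_ge; lia.
rewrite -(leq_pmul2l δ_pos) -(@leq_pmul2l 2) //.
have := leq_mul (leqnn (2 * D)) cover.
have := leq_mul (leqnn D) unsat.
have := leq_mul δ_ge (leqnn f).
lia.
Qed.

Section Bipartite.
Variables (T : finType) (e : rel T) (X : {set T}).
Hypothesis e_sym : forall x y, e x y -> e y x.
Hypothesis e_cross : forall x y, e x y -> (x \in X) != (y \in X).

Lemma e_cross_notin x y : e x y -> x \in X -> y \notin X.
Proof. by move=> /e_cross; case: (x \in X); case: (y \in X). Qed.

Lemma card_le_edge_set (Q : {set T * T}) (S : {set T}) (f : rel T) :
  (forall p, p \in Q -> [&& p.1 \in X, p.2 \notin X, p.1 \in S, p.2 \in S & f p.1 p.2]) ->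
  #|Q| <= #|edge_set S f|.
Proof.
move=> Q_edges.
rewrite -(@card_in_imset _ _ (fun p : T * T => [set p.1; p.2]) Q).
  apply: subset_leq_card; apply/subsetP => E /imsetP [[x y] /Q_edges /and5P [xX yX xS yS fxy] ->].
  rewrite inE; apply/existsP; exists x; rewrite xS; apply/existsP; exists y.
  rewrite yS fxy eqxx !andbT /=.
  by apply: contraNneq yX => <-.
move=> [x y] [x' y'] /Q_edges /and5P [xX yX _ _ _] /Q_edges /and5P [x'X y'X _ _ _] /= xy_x'y'.
have : x \in [set x'; y'] by rewrite -xy_x'y' !inE eqxx.
rewrite !inE => /orP [/eqP x_x' | /eqP x_y']; last by rewrite -x_y' xX in y'X.
have : y \in [set x'; y'] by rewrite -xy_x'y' !inE eqxx orbT.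
rewrite !inE => /orP [/eqP y_x' | /eqP ->]; last by rewrite x_x'.
by rewrite y_x' x'X in yX.
Qed.

Definition cross_edges (W : {set T}) :=
  [set p : T * T | [&& p.1 \in X, p.1 \in W, p.2 \in W & e p.1 p.2]].

Lemma card_edge_set_le_cross : #|edge_set [set: T] e| <= #|cross_edges [set: T]|.
Proof.
apply: leq_trans (leq_imset_card (fun p : T * T => [set p.1; p.2]) _).
apply: subset_leq_card; apply/subsetP => E.
rewrite inE => /existsP [x /andP [_ /existsP [y /andP [_ /and3P [_ exy /eqP ->]]]]].
have [xX | xNX] := boolP (x \in X).
  by apply/imsetP; exists (x, y); rewrite // !inE /= xX exy.
apply/imsetP; exists (y, x); last by rewrite /= setUC.
have yX : y \in X by move: (e_cross exy); rewrite (negbTE xNX); case: (y \in X).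
by rewrite !inE /= yX e_sym.
Qed.

Lemma cross_edges0 : cross_edges set0 = set0.
Proof. by apply/setP => p; rewrite !inE andbF. Qed.

Lemma card_cross_edges_setD1 (W : {set T}) w : w \in W ->
  #|cross_edges W| <= #|cross_edges (W :\ w)| + #|nbhd e w :&: W|.
Proof.
move=> wW.
pose at_w := if w \in X then [set (w, y) | y in nbhd e w :&: W]
             else [set (x, w) | x in nbhd e w :&: W].
have card_at_w : #|at_w| <= #|nbhd e w :&: W|.
  by rewrite /at_w; case: (w \in X); apply: leq_imset_card.
apply: leq_trans (leq_add (leqnn _) card_at_w).
apply: leq_trans (leq_card_setU _ _).
apply: subset_leq_card; apply/subsetP => -[x y].
rewrite !inE /= => /and4P [xX xW yW exy].
have [x_w | x_w] := eqVneq x w; first subst x.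
  by rewrite /at_w xX; apply/orP; right; apply/imsetP; exists y; rewrite // !inE exy yW.
have [y_w | y_w] := eqVneq y w; first subst y.
  rewrite /at_w (negbTE (e_cross_notin exy xX)); apply/orP; right.
  by apply/imsetP; exists x; rewrite // !inE e_sym.
by rewrite xX xW yW exy.
Qed.

(* In a minimal W with δ #|W| <= #|cross_edges W| no vertex has degree < δ,
   since deleting it would preserve the inequality. *)
Lemma exists_min_degree_subgraph (δ : nat) : 0 < δ -> 0 < #|T| ->
  δ * #|T| <= #|cross_edges [set: T]| ->
  exists2 W : {set T}, W != set0 & forall w, w \in W -> δ <= #|nbhd e w :&: W|.
Proof.
move=> δ_pos T_pos dense.
pose ok (W : {set T}) := (W != set0) && (δ * #|W| <= #|cross_edges W|).
have okT : ok [set: T] by rewrite /ok cardsT dense andbT -card_gt0 cardsT.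
case: (arg_minnP (fun W : {set T} => #|W|) okT) => W /andP [W_ne W_dense] W_min.
exists W => // w wW; rewrite leqNgt; apply/negP => deg_w.
have card_W : #|W| = #|W :\ w|.+1 by rewrite (cardsD1 w W) wW.
have W'_dense : δ * #|W :\ w| < #|cross_edges (W :\ w)|.
  by move: W_dense (card_cross_edges_setD1 wW); rewrite card_W; nia.
have W'_ne : W :\ w != set0.
  by apply: contraTneq W'_dense => ->; rewrite cross_edges0 !cards0.
have := W_min (W :\ w); rewrite /ok W'_ne (ltnW W'_dense) => /(_ isT).
by rewrite card_W ltnn.
Qed.

Section Greedy.
Variables (W : {set T}) (δ D κ : nat).
Hypothesis W_deg : forall w, w \in W -> δ <= #|nbhd e w :&: W|.
Hypothesis sparse : sparse_links e κ.

Definition picked x := [set y in take δ (enum (nbhd e x :&: W))].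

Lemma picked_sub x : picked x \subset nbhd e x :&: W.
Proof. by apply/subsetP => y; rewrite inE => /mem_take; rewrite mem_enum. Qed.

Lemma card_picked x : x \in W -> #|picked x| = δ.
Proof.
move=> xW; rewrite cardsE (card_uniqP (take_uniq _ (enum_uniq _))) size_take -cardE.
by case: ltnP (W_deg xW) => // lt_deg le_deg; apply/eqP; rewrite eqn_leq lt_deg le_deg.
Qed.

Definition picked_pairs := [set p : T * T | (p.1 \in X :&: W) && (p.2 \in picked p.1)].

Lemma picked_pairsP p :
  p \in picked_pairs -> [&& p.1 \in X, p.2 \notin X, p.1 \in W, p.2 \in W & e p.1 p.2].
Proof.
rewrite inE => /andP [/setIP [xX xW] /(subsetP (picked_sub _))].
by rewrite !inE => /andP [exy yW]; rewrite xX xW yW exy (e_cross_notin exy xX).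
Qed.

Lemma card_row_picked_pairs x :
  #|row picked_pairs x| = if x \in X :&: W then δ else 0.
Proof.
case: ifPn => [xXW | xNXW].
  rewrite -(card_picked (x := x)); last by case/setIP: xXW.
  by apply: eq_card => y; rewrite !inE /= -in_setI xXW.
by apply/eqP; rewrite cards_eq0; apply/eqP/setP => y; rewrite !inE -in_setI (negbTE xNXW).
Qed.

Lemma card_picked_pairs : #|picked_pairs| = #|X :&: W| * δ.
Proof.
rewrite card_pairs_row (eq_bigr _ (fun x _ => card_row_picked_pairs x)).
by rewrite -big_mkcond sum_nat_const.
Qed.

Definition admissible (F : {set T * T}) :=
  [&& F \subset picked_pairs, [forall x, #|row F x| <= D] & C4_freeb (pair_rel F)].

Lemma admissible0 : admissible set0.
Proof.
rewrite /admissible sub0set; apply/and3P; split => //.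
  apply/forallP => x; rewrite (_ : row set0 x = set0) ?cards0 //.
  by apply/setP => y; rewrite !inE.
by apply/C4_freeP => -[a [b [c [d [_ ab _ _ _]]]]]; rewrite /pair_rel !inE in ab.
Qed.

Definition second_nbhd (F : {set T * T}) y :=
  [set z | [exists w, ((w, y) \in F) && ((w, z) \in F)]] :\ y.

Definition link_pairs (F : {set T * T}) y :=
  [set p : T * T | [&& p.1 \in col F y, p.2 \in second_nbhd F y & e p.1 p.2]].

Lemma picked_pairs_sides (F : {set T * T}) u v : F \subset picked_pairs ->
  (u, v) \in F -> (u \in X) && (v \notin X).
Proof. by move=> F_picked /(subsetP F_picked) /picked_pairsP /and5P [-> -> _ _ _]. Qed.

Lemma card_link_pairs (F : {set T * T}) y :
  F \subset picked_pairs -> (forall x, #|row F x| <= D) ->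
  2 * #|link_pairs F y| <= κ * (1 + D) * #|col F y|.
Proof.
move=> F_picked F_row.
set A := col F y; set B := second_nbhd F y.
have AX z : z \in A -> z \in X.
  by rewrite inE => /(picked_pairs_sides F_picked) /andP [].
have BNX z : z \in B -> z \notin X.
  by rewrite !inE => /andP [_ /existsP [w /andP [_ /(picked_pairs_sides F_picked) /andP []]]].
have card_B : #|B| <= #|A| * D.
  apply: (@leq_trans #|\bigcup_(w in A) row F w|).
    apply: subset_leq_card; apply/subsetP => z.
    rewrite !inE => /andP [_ /existsP [w /andP [wy wz]]].
    by apply/bigcupP; exists w; rewrite !inE.
  by apply: leq_trans (card_bigcup_le _ _) _; rewrite -sum_nat_const leq_sum.
have A_nbhd : A \subset nbhd e y.
  apply/subsetP => z; rewrite !inE => /(subsetP F_picked) /picked_pairsP.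
  by case/and5P => _ _ _ _ /e_sym.
have B_y : B \subset [set~ y] by apply/subsetP => z; rewrite !inE => /andP [].
have AB : [disjoint A & B].
  by rewrite disjoints_subset; apply/subsetP => z /AX zX; rewrite inE; apply: contraL zX => /BNX.
have link_edges : #|link_pairs F y| <= #|edge_set (A :|: B) (bip_rel e A B)|.
  apply: card_le_edge_set => p; rewrite inE => /and3P [pA pB ep].
  by rewrite AX // BNX // !in_setU pA pB orbT /bip_rel ep pA pB.
apply: leq_trans (leq_mul (leqnn 2) link_edges) _.
apply: leq_trans (sparse A_nbhd B_y AB) _.
rewrite -mulnA leq_mul2l mulnDl mul1n (mulnC D); apply/orP; right.
by apply: leq_trans (leq_card_setU _ _) _; rewrite leq_add2l.
Qed.

Section Maximal.
Variable F : {set T * T}.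
Hypothesis F_adm : admissible F.
Hypothesis F_max : forall G, admissible G -> #|G| <= #|F|.

Let F_picked : F \subset picked_pairs. Proof. by case/and3P: F_adm. Qed.

Lemma pair_rel_oriented u v : pair_rel F u v -> (u \in X) || (v \notin X) -> (u, v) \in F.
Proof.
case/orP => // /(picked_pairs_sides F_picked) /andP [vX uNX].
by rewrite vX (negbTE uNX).
Qed.

(* Maximality leaves only a 4-cycle to block (x, y), i.e. an F-path
   x - y' - w - y, and that puts (x, y) in link_pairs F y'. *)
Lemma maximal_admissible_link x y : (x, y) \in picked_pairs -> (x, y) \notin F ->
  #|row F x| < D -> (x, y) \in \bigcup_y' link_pairs F y'.
Proof.
move=> xy_picked xy_F x_unsat.
case/and3P: F_adm => _ /forallP F_row F_C4.
have /and5P [xX yNX _ _ exy] := picked_pairsP xy_picked.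
have not_adm : ~~ admissible ((x, y) |: F).
  by apply/negP => /F_max; rewrite cardsU1 xy_F add1n ltnn.
have new_C4 : ~~ C4_freeb (pair_rel ((x, y) |: F)).
  apply: contra not_adm => C4; rewrite /admissible C4 andbT subUset sub1set xy_picked F_picked.
  apply/forallP => x'; have [x'_x | x'_x] := eqVneq x' x.
    subst x'; apply: leq_trans (subset_leq_card (_ : _ \subset y |: row F x)) _.
      by apply/subsetP => z; rewrite !inE xpair_eqE eqxx /= => /orP [] ->; rewrite ?orbT.
    by rewrite cardsU1; apply: leq_trans (leq_add (leq_b1 _) (leqnn _)) x_unsat.
  rewrite (_ : row _ x' = row F x') //.
  by apply/setP => z; rewrite !inE xpair_eqE (negbTE x'_x).
have [y' [w /and4P [xy' y'w wy y_y']]] := C4_freeb_setU1 F_C4 new_C4.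
have xy'_F : (x, y') \in F by rewrite pair_rel_oriented // xX.
have /andP [_ y'NX] := picked_pairs_sides F_picked xy'_F.
have wy'_F : (w, y') \in F by rewrite pair_rel_oriented 1?pair_rel_sym // y'NX orbT.
have wy_F : (w, y) \in F by rewrite pair_rel_oriented // yNX orbT.
apply/bigcupP; exists y' => //.
by rewrite !inE /= xy'_F exy y_y' andbT; apply/existsP; exists w; rewrite wy'_F wy_F.
Qed.

Lemma card_unsaturated :
  2 * #|[set p in picked_pairs :\: F | #|row F p.1| < D]| <= κ * (1 + D) * #|F|.
Proof.
case/and3P: F_adm => _ /forallP F_row _.
apply: (@leq_trans (2 * \sum_y #|link_pairs F y|)).
  rewrite leq_mul2l; apply/orP; right; apply: leq_trans (card_bigcup_le _ _).
  apply: subset_leq_card; apply/subsetP => -[x y] /setIdP [/setDP [xy_picked xy_F] x_unsat].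
  exact: maximal_admissible_link.
rewrite big_distrr (card_pairs_col F) big_distrr /=.
by apply: leq_sum => y _; apply: card_link_pairs.
Qed.

Lemma card_saturated :
  D * #|[set p in picked_pairs | D <= #|row F p.1|]| <= δ * #|F|.
Proof.
set sat := [set x | D <= #|row F x|].
have card_sat : #|sat| * D <= #|F|.
  rewrite (card_pairs_row F) -sum_nat_const big_mkcond /=; apply: leq_sum => x _.
  by case: ifP; rewrite // inE.
have : #|[set p in picked_pairs | D <= #|row F p.1|]| <= #|sat| * δ.
  rewrite card_pairs_row -sum_nat_const [leqRHS]big_mkcond /=; apply: leq_sum => x _.
  case: ifPn => x_sat.
    apply: leq_trans (subset_leq_card (_ : _ \subset row picked_pairs x)) _.
      by apply/subsetP => y; rewrite !inE => /andP [].
    by rewrite card_row_picked_pairs; case: ifP.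
  rewrite leqn0 cards_eq0; apply/eqP/setP => y; rewrite !inE /=.
  by rewrite inE in x_sat; rewrite (negbTE x_sat) andbF.
by move=> le_sat; apply: leq_trans (leq_mul (leqnn D) le_sat) _; nia.
Qed.

Lemma card_picked_pairs_le :
  #|picked_pairs| <= #|F| + #|[set p in picked_pairs | D <= #|row F p.1|]|
                      + #|[set p in picked_pairs :\: F | #|row F p.1| < D]|.
Proof.
set sat := [set p in _ | _]; set unsat := [set p in _ | _].
apply: leq_trans (subset_leq_card (_ : _ \subset F :|: sat :|: unsat)) _.
  apply/subsetP => p p_picked; rewrite !in_setU.
  have [pF | pNF] := boolP (p \in F); first by rewrite -orbA; apply/orP; left.
  case: (leqP D #|row F p.1|) => D_row.
    by apply/orP; left; apply/orP; right; apply/setIdP.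
  by apply/orP; right; apply/setIdP; rewrite in_setD pNF.
by apply: leq_trans (leq_card_setU _ _) _; rewrite leq_add2r leq_card_setU.
Qed.

Lemma maximal_admissible_large :
  2 * D + D * κ * (1 + D) <= 2 * δ -> D * #|X :&: W| <= 2 * #|F|.
Proof.
have cover := card_picked_pairs_le; rewrite card_picked_pairs in cover.
exact: greedy_count_arith cover card_saturated card_unsaturated.
Qed.

End Maximal.

End Greedy.

Lemma C4_free_subgraph_of_min_degree (W : {set T}) (δ κ t : nat) :
  (forall w, w \in W -> δ <= #|nbhd e w :&: W|) -> sparse_links e κ ->
  0 < t -> 0 < κ -> 14 * t * t * κ <= δ -> W != set0 -> #|W| <= 2 * #|X :&: W| ->
  exists (S : {set T}) (f : rel T), subgraph_of e S f /\ C4_free f /\ Rle (INR t) (avg_deg S f).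
Proof.
move=> W_deg sparse t_pos κ_pos δ_ge W_ne W_side.
have [F F_adm F_max] := arg_maxnP (fun F : {set T * T} => #|F|) (admissible0 W δ (4 * t)).
have F_picked : F \subset picked_pairs W δ by case/and3P: (F_adm).
have /C4_freeP F_C4 : C4_freeb (pair_rel F) by case/and3P: (F_adm).
have F_large : 4 * t * #|X :&: W| <= 2 * #|F|.
  by apply: (maximal_admissible_large W_deg sparse F_adm F_max); nia.
exists W, (pair_rel F); split; [split | split] => //.
- by move=> x y; rewrite pair_rel_sym.
- move=> x y /orP [] /(subsetP F_picked) /picked_pairsP /and5P [_ _ ? ? exy] /=.
    by apply/and3P.
  by apply/and3P; split; rewrite // e_sym.
apply: avg_deg_ge_nat W_ne _.
have F_edges : #|F| <= #|edge_set W (pair_rel F)|.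
  apply: card_le_edge_set => -[u v] uvF.
  have /and5P [-> -> -> -> _] := picked_pairsP (subsetP F_picked _ uvF).
  by apply/orP; left.
nia.
Qed.

End Bipartite.

Lemma C4_free_subgraph_of_cross_edges (T : finType) (e : rel T) (X : {set T}) (t δ κ : nat) :
  (forall x y, e x y -> e y x) -> (forall x y, e x y -> (x \in X) != (y \in X)) ->
  sparse_links e κ -> 0 < t -> 0 < κ -> 14 * t * t * κ <= δ -> 0 < #|T| ->
  δ * #|T| <= #|cross_edges e X [set: T]| ->
  exists (S : {set T}) (f : rel T), subgraph_of e S f /\ C4_free f /\ Rle (INR t) (avg_deg S f).
Proof.
move=> e_sym e_cross sparse t_pos κ_pos δ_ge T_pos dense.
have δ_pos : 0 < δ by apply: leq_trans δ_ge; rewrite !muln_gt0 t_pos κ_pos.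
have [W W_ne W_deg] := exists_min_degree_subgraph e_sym e_cross δ_pos T_pos dense.
have [W_X | W_NX] := leqP #|W| (2 * #|X :&: W|).
  exact: (C4_free_subgraph_of_min_degree e_sym e_cross W_deg sparse t_pos κ_pos δ_ge W_ne W_X).
have e_cross' x y : e x y -> (x \in ~: X) != (y \in ~: X).
  by rewrite !inE; move/e_cross; case: (x \in X); case: (y \in X).
apply: (C4_free_subgraph_of_min_degree e_sym e_cross' W_deg sparse t_pos κ_pos δ_ge W_ne).
by move: (cardsID X W) W_NX; rewrite setIC (setIC (~: X)) -setDE; lia.
Qed.

Section FifthRoot.
Local Open Scope R_scope.

Lemma Rpower_fifth (d : R) : 101 ^ 5 <= d ->
  0 < Rpower d (1 / 5) /\ Rpower d (1 / 5) ^ 5 = d /\ 100 <= Rpower d (1 / 5).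
Proof.
move=> d_ge; set k := Rpower d (1 / 5).
have k_pos : 0 < k by apply: exp_pos.
have k5 : k ^ 5 = d.
  rewrite -Rpower_pow // Rpower_mult INR_IZR_INZ /= (_ : 1 / 5 * 5 = 1); last by field.
  by apply: Rpower_1; lra.
split => //; split => //.
apply: Rnot_lt_le => k_lt.
have : k ^ 5 <= 100 ^ 5 by apply: pow_incr; lra.
have : 100 ^ 5 < 101 ^ 5 by rewrite /=; lra.
lra.
Qed.

Lemma exists_nat_between (k : R) : 0 <= k -> exists κ : nat, k <= INR κ <= k + 1.
Proof.
move=> k_ge0; have [up_gt up_le] := archimed k.
have up_ge0 : (0 <= up k)%Z by apply: le_IZR; lra.
by exists (Z.to_nat (up k)); rewrite INR_IZR_INZ Z2Nat.id //; lra.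
Qed.

(* With u = t^2 <= k^(5/2): (28 u k)^2 <= 784 k^7 <= (k^5/4)^2 as soon as k^3 >= 12544. *)
Lemma t_sq_kappa_lt (k t κ δ : R) : 100 <= k -> 1 <= t -> t ^ 4 <= k ^ 5 ->
  κ <= k + 1 -> k ^ 5 < 2 * (δ + 1) -> 14 * t * t * κ < δ.
Proof.
move=> k_ge t_ge t4 κ_le k5_lt.
set u := t * t.
have u_ge0 : 0 <= u by rewrite /u; nra.
have uu : u * u <= k ^ 5 by rewrite /u (_ : t * t * (t * t) = t ^ 4); [lra | ring].
have k3 : 12544 <= k ^ 3 by rewrite /=; nra.
have k5_ge : 4 <= k ^ 5 by rewrite /=; nra.
have sq_le : (28 * u * k) * (28 * u * k) <= (k ^ 5 / 4) * (k ^ 5 / 4).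
  have k7 : 0 <= k ^ 7 by apply: pow_le; lra.
  have : u * u * (k * k) <= k ^ 5 * (k * k) by apply: Rmult_le_compat_r; nra.
  rewrite (_ : k ^ 5 / 4 * (k ^ 5 / 4) = k ^ 7 * k ^ 3 / 16); last by field.
  rewrite (_ : k ^ 5 * (k * k) = k ^ 7); last by ring.
  nra.
have : 28 * u * k <= k ^ 5 / 4.
  apply: Rnot_lt_le => lt; have : 0 <= k ^ 5 / 4 by lra.
  nra.
rewrite /u in u_ge0 *; nra.
Qed.

Lemma t_sq_kappa_le (k : R) (t κ δ : nat) : 100 <= k -> (0 < t)%N -> INR t ^ 4 <= k ^ 5 ->
  k <= INR κ <= k + 1 -> k ^ 5 < 2 * (INR δ + 1) -> (0 < κ)%N /\ (14 * t * t * κ <= δ)%N.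
Proof.
move=> k_ge /leP t_pos t4 [k_le κ_le] k5_lt; split.
  by apply/ltP/INR_lt; rewrite /=; lra.
have t_ge : 1 <= INR t by apply: (le_INR 1).
have := t_sq_kappa_lt k_ge t_ge t4 κ_le k5_lt.
rewrite (_ : 14 = INR 14); last by rewrite /=; ring.
by rewrite -!mult_INR => /INR_lt /ltP /ltnW.
Qed.

End FifthRoot.

Theorem corollary7 :
  exists d0 : R, forall d : R, Rle d0 d -> forall t : nat, (0 < t)%N ->
  forall (T : finType) (e : rel T),
    simple_graph e -> bipartite e ->
    avg_deg [set: T] e = d ->
    Rle (pow (INR t) 4) d ->
    (~ exists (S : {set T}) (f : rel T),
         subgraph_of e S f /\ C4_free f /\ Rle (INR t) (avg_deg S f)) ->
    exists (v : T) (A' B' : {set T}),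
      [/\ A' \subset nbhd e v, B' \subset [set~ v], [disjoint A' & B'] &
          Rle (Rpower d (Rdiv 1 5)) (avg_deg (A' :|: B') (bip_rel e A' B'))].
Proof.
exists (pow 101 5) => d d_ge t t_pos T e [e_sym _] [X e_cross] avg_d t4_le no_C4_free.
apply: NNPP => no_link; apply: no_C4_free.
have [k_pos [k5 k_ge]] := Rpower_fifth d_ge.
set k := Rpower d (1 / 5) in k_pos k5 k_ge no_link.
have [κ κ_k] := exists_nat_between (Rlt_le _ _ k_pos).
have sparse : sparse_links e κ.
  move=> v A B A_v B_v AB; apply: nat_density_of_avg_deg_lt (proj1 κ_k).
  by apply: Rnot_le_lt => dense; apply: no_link; exists v, A, B.
have T_pos : (0 < #|T|)%N.
  rewrite -cardsT card_gt0; apply/negP => /eqP T0; move: d_ge.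
  by rewrite -avg_d T0 /avg_deg eqxx; apply/Rlt_not_le/pow_lt; lra.
pose δ := #|cross_edges e X [set: T]| %/ #|T|.
have d_lt : Rlt (pow k 5) (2 * (INR δ + 1)).
  by rewrite k5 -avg_d; apply: avg_deg_lt_floor (card_edge_set_le_cross e_sym e_cross).
have t4_le_k5 : Rle (pow (INR t) 4) (pow k 5) by rewrite k5.
have [κ_pos δ_ge] := t_sq_kappa_le k_ge t_pos t4_le_k5 κ_k d_lt.
apply: (C4_free_subgraph_of_cross_edges e_sym e_cross sparse t_pos κ_pos δ_ge T_pos).
exact: leq_divM.
Qed.
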